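(* Let $M\le N$, $K=N-M$. Let $A$ be a commutative unital $C^*$-algebra and $P\in M_M(A)$ a submagic matrix whose entries generate $A$, and write $A=C(S)$ with $S\subset\widetilde S_M$ so that $P_{ij}$ is the function $\sigma\mapsto1$ if $\sigma(j)=i$ and $0$ otherwise. The following are equivalent: (1) $P$ can be completed to a magic matrix $\widetilde P\in M_N(A)$ (one whose upper-left $M\times M$ block is $P$); (2) each $\sigma\in S$ has at most $K$ undefined values (i.e. if $\sigma:X\to Y$ then $M-|X|\le K$); (3) $\sum_{i,j}P_{ij}\ge (M-K)1$.
   Context: $\widetilde S_M$ is the set of partial permutations of $\{1,\ldots,M\}$, i.e. bijections $\sigma:X\to Y$ with $X,Y\subset\{1,\ldots,M\}$; $\sigma(j)$ is undefined for $j\notin X$. A submagic matrix over $A$ is a square matrix of orthogonal projections, pairwise orthogonal within each row and each column; it is magic if moreover each row and each column sums to $1$. Every commutative unital $C^*$-algebra generated by the entries of an $M\times M$ submagic matrix is of the form $C(S)$ as described, for some $S\subset\widetilde S_M$. *)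

From HB Require Import structures.
From mathcomp Require Import all_boot all_order all_algebra.
From mathcomp Require Import complex.
From mathcomp Require Import reals.
Set Implicit Arguments. Unset Strict Implicit. Unset Printing Implicit Defensive.
Import Order.TTheory GRing.Theory Num.Theory.
Local Open Scope ring_scope.

(* Partial permutations of {1..M} (encoded as 'I_M): a finite function
   j |-> Some i (sigma(j) = i) or None (sigma(j) undefined), injective on
   its domain. *)
Definition pperm_axiom M (f : {ffun 'I_M -> option 'I_M}) : bool :=
  [forall j, forall k, (f j != None) ==> (f j == f k) ==> (j == k)].

Definition pperm M := {f : {ffun 'I_M -> option 'I_M} | pperm_axiom f}.

Definition pp_app M (s : pperm M) (j : 'I_M) : option 'I_M := val s j.

Definition pp_dom M (s : pperm M) : {set 'I_M} := [set j | pp_app s j != None].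

Definition pts M (S : {set pperm M}) := {s : pperm M | s \in S}.

(* C(S): complex-valued functions on the finite (discrete) space S;
   all algebra operations are pointwise. *)
Definition CS (R : realType) M (S : {set pperm M}) := pts S -> R[i].

Definition is_proj (R : realType) M (S : {set pperm M}) (p : CS R S) : Prop :=
  forall s, p s * p s = p s /\ (p s)^* = p s.

Definition magic (R : realType) M (S : {set pperm M}) N
    (Q : 'I_N -> 'I_N -> CS R S) : Prop :=
  [/\ forall i j, is_proj (Q i j),
      forall i j k s, j != k -> Q i j s * Q i k s = 0,
      forall i j k s, i != k -> Q i j s * Q k j s = 0,
      forall i s, \sum_(j < N) Q i j s = 1
    & forall j s, \sum_(i < N) Q i j s = 1].

Definition Pmat (R : realType) M (S : {set pperm M}) (i j : 'I_M) : CS R S :=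
  fun s => if pp_app (val s) j == Some i then 1 else 0.

(* Over the discrete space S a matrix over C(S) is a family, indexed by the
   points of S, of scalar matrices, and a magic matrix is pointwise a
   0/1 doubly stochastic matrix, i.e. a permutation matrix.  Since
   sum_ij P_ij (sigma) = |X| for sigma : X -> Y, conditions (2) and (3) are the
   same inequality.  If sigma is undefined at M - |X| points, the columns of a
   completion indexed by these points carry all their mass in the K extra
   rows, so M - |X| <= K.  Conversely, when M - |X| <= K, send the undefined
   points of sigma injectively to the K extra indices and extend this
   injection to a permutation of {1..N}; its permutation matrices complete P. *)
From HB Require Import structures.
From mathcomp Require Import all_boot all_order all_algebra.
From mathcomp Require Import complex.
From mathcomp Require Import reals.
From mathcomp Require Import fingroup perm.
From Stdlib Require Import FunctionalExtensionality.
Import Order.TTheory GRing.Theory Num.Theory.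
Local Open Scope ring_scope.

Lemma leq_card_inj_into {T : finType} {A B : {set T}} :
  (#|A| <= #|B|)%N ->
  exists h : T -> T, {in A &, injective h} /\ {in A, forall x, h x \in B}.
Proof.
move=> leAB; pose h x := nth x (enum B) (index x (enum A)).
have idx_lt x : x \in A -> (index x (enum A) < size (enum B))%N.
  by move=> xA; rewrite -cardE (leq_trans _ leAB) // cardE index_mem mem_enum.
exists h; split => [x y xA yA | x xA]; last by rewrite -mem_enum mem_nth ?idx_lt.
rewrite /h (set_nth_default x y (idx_lt _ yA)).
move/eqP; rewrite nth_uniq ?enum_uniq ?idx_lt // => /eqP.
by apply: (index_inj x); rewrite mem_enum.
Qed.

Lemma perm_of_inj_in (T : finType) (A : {set T}) (f : T -> T) :
  {in A &, injective f} -> exists p : {perm T}, {in A, p =1 f}.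
Proof.
move=> finj.
have card_compl : #|~: A| = #|~: (f @: A)|.
  by apply: (@addnI #|A|); rewrite cardsC -[in RHS](card_in_imset finj) cardsC.
have [h [hinj hC]] := leq_card_inj_into (eq_leq card_compl).
pose g x := if x \in A then f x else h x.
have ginj : injective g.
  have fA x : x \in A -> f x \in f @: A by move=> xA; apply: imset_f.
  have hA x : x \notin A -> h x \notin f @: A.
    by move=> xA; have := hC x; rewrite !inE => ->.
  move=> x y; rewrite /g.
  case: (boolP (x \in A)) => xA; case: (boolP (y \in A)) => yA.
  - exact: finj.
  - by move=> fxhy; have := hA _ yA; rewrite -fxhy fA.
  - by move=> hxfy; have := hA _ xA; rewrite hxfy fA.
  - by apply: hinj; rewrite inE.
by exists (perm ginj) => x xA; rewrite permE /g xA.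
Qed.

Lemma proj_ge0 (C : numClosedFieldType) (x : C) :
  x * x = x -> x^* = x -> 0 <= x.
Proof.
by move=> xx xc; rewrite -xx -{2}xc -normCK exprn_ge0 // normr_ge0.
Qed.

(* Double counting: the total mass #|cols| of the columns [cols] lies in the
   rows [rows], each of which carries mass at most 1. *)
Lemma card_le_stochastic_support {R : numDomainType} {I J : finType}
    (A : I -> J -> R) (rows : {set I}) (cols : {set J}) :
  (forall i j, 0 <= A i j) ->
  (forall i, \sum_j A i j <= 1) ->
  (forall j, \sum_i A i j = 1) ->
  (forall i j, j \in cols -> i \notin rows -> A i j = 0) ->
  (#|cols| <= #|rows|)%N.
Proof.
move=> A_ge0 row_le1 col_eq1 A_supp; rewrite -(ler_nat R) -!sumr_const.
have colE j : j \in cols -> 1 = \sum_(i in rows) A i j.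
  move=> jcols; rewrite -(col_eq1 j) [RHS]big_mkcond /=.
  by apply: eq_bigr => i _; case: ifP => // /negbT /(A_supp _ _ jcols).
rewrite (eq_bigr _ colE).
apply: le_trans (_ : \sum_j \sum_(i in rows) A i j <= _).
  by rewrite [leRHS](bigID (mem cols)) /= lerDl sumr_ge0 // => j _;
    apply: sumr_ge0.
by rewrite exchange_big /=; apply: ler_sum => i _; apply: row_le1.
Qed.

Lemma pp_app_inj {M} {s : pperm M} {j k i : 'I_M} :
  pp_app s j = Some i -> pp_app s k = Some i -> j = k.
Proof.
move=> sj sk; have /forallP/(_ j)/forallP/(_ k) := valP s.
by rewrite /pp_app in sj sk *; rewrite sj sk eqxx => /eqP.
Qed.

Lemma card_pp_undef M (s : pperm M) : #|~: pp_dom s| = (M - #|pp_dom s|)%N.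
Proof. by rewrite cardsCs setCK card_ord. Qed.

Lemma card_compl_widen_ord {M N : nat} (hMN : (M <= N)%N) :
  #|~: [set widen_ord hMN j | j in [set: 'I_M]]| = (N - M)%N.
Proof.
rewrite cardsCs setCK card_imset ?cardsT ?card_ord //.
by move=> j k [] /ord_inj.
Qed.

Lemma sum_Pmat (R : realType) M (S : {set pperm M}) (s : pts S) :
  \sum_(i < M) \sum_(j < M) @Pmat R M S i j s = #|pp_dom (val s)|%:R.
Proof.
rewrite exchange_big /=.
rewrite (eq_bigr (fun j => if j \in pp_dom (val s) then 1 else 0)).
  by rewrite -big_mkcond sumr_const.
move=> j _; rewrite /Pmat inE.
case e: (pp_app (val s) j) => [i0|] /=; last by rewrite big1.
rewrite (bigD1 i0) //= eqxx big1 ?addr0 // => i ne.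
by case: eqP => // -[] h; rewrite h eqxx in ne.
Qed.

Lemma sum_Pmat_geE (R : realType) M N (S : {set pperm M}) (s : pts S) :
  ((M%:R - (N - M)%N%:R : R[i]) <= \sum_(i < M) \sum_(j < M) @Pmat R M S i j s)
  = (M - #|pp_dom (val s)| <= N - M)%N.
Proof. by rewrite sum_Pmat lerBlDr -natrD ler_nat leq_subLR addnC. Qed.

Lemma magic_completion_undef_le (R : realType) (M N : nat)
    (hMN : (M <= N)%N) (S : {set pperm M}) (Q : 'I_N -> 'I_N -> CS R S) :
  magic Q ->
  (forall i j, Q (widen_ord hMN i) (widen_ord hMN j) = @Pmat R M S i j) ->
  forall s, s \in S -> (M - #|pp_dom s| <= N - M)%N.
Proof.
move=> [Q_proj _ _ row1 col1] QP s sS; pose w := widen_ord hMN.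
have w_inj : injective w by move=> j k [] /ord_inj.
rewrite -card_pp_undef -(card_imset _ w_inj) -(card_compl_widen_ord hMN).
apply: (card_le_stochastic_support (fun i j => Q i j (exist _ s sS))).
- by move=> i j; have [] := Q_proj i j (exist _ s sS); apply: proj_ge0.
- by move=> i; rewrite row1.
- by move=> j; rewrite col1.
move=> ? ? /imsetP[j jU ->]; rewrite inE negbK => /imsetP[i _ ->].
by move: jU; rewrite QP /Pmat !inE negbK /= => /eqP ->.
Qed.

Lemma pperm_completion {M N : nat} (hMN : (M <= N)%N) {s : pperm M} :
  (M - #|pp_dom s| <= N - M)%N ->
  exists p : {perm 'I_N}, forall i j : 'I_M,
    (p (widen_ord hMN j) == widen_ord hMN i) = (pp_app s j == Some i).
Proof.
move=> undef_le; pose w := widen_ord hMN.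
have w_inj : injective w by move=> j k [] /ord_inj.
pose top := [set w j | j in [set: 'I_M]].
have [h [h_inj h_out]] : exists h : 'I_N -> 'I_N,
    {in w @: ~: pp_dom s &, injective h} /\
    {in w @: ~: pp_dom s, forall x, h x \in ~: top}.
  by apply: leq_card_inj_into; rewrite card_imset // card_pp_undef
    card_compl_widen_ord.
have h_undef j : pp_app s j = None -> h (w j) \notin top.
  move=> sj; have := h_out (w j); rewrite inE; apply.
  by rewrite imset_f // !inE negbK sj.
pose g j := if pp_app s j is Some i then w i else h (w j).
have g_inj : injective g.
  move=> j k; rewrite /g.
  case sj: (pp_app s j) => [i1|]; case sk: (pp_app s k) => [i2|].
  - by move/w_inj => i12; apply: (pp_app_inj sj); rewrite sk i12.
  - by move=> wh; have := h_undef _ sk; rewrite -wh imset_f.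
  - by move=> hw; have := h_undef _ sj; rewrite hw imset_f.
  - move/h_inj => /(_ _ _)/w_inj; apply; apply: imset_f.
      by rewrite !inE negbK sj.
    by rewrite !inE negbK sk.
pose f (x : 'I_N) := if (insub (val x) : option 'I_M) is Some j then g j else x.
have [p pf] : exists p : {perm 'I_N}, {in top, p =1 f}.
  apply: perm_of_inj_in => _ _ /imsetP[j _ ->] /imsetP[k _ ->].
  by rewrite /f /= !valK => /g_inj ->.
have p_w j : p (w j) = g j by rewrite pf ?imset_f // /f /= valK.
exists p => i j; rewrite p_w /g; case sj: (pp_app s j) => [i0|].
  by rewrite (inj_eq w_inj).
by have := h_undef _ sj; case: eqP => // ->; rewrite imset_f.
Qed.

Lemma perm_magic (R : realType) M (S : {set pperm M}) N
    (p : pts S -> {perm 'I_N}) :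
  magic (fun i j s => if p s j == i then 1 else 0 : R[i]).
Proof.
split.
- by move=> i j s; case: ifP => _; rewrite ?mulr1 ?mul0r ?conjC1 ?conjC0.
- move=> i j k s jk; case: eqP => [<-|_]; last by rewrite mul0r.
  by rewrite (inj_eq perm_inj) eq_sym (negPf jk) mulr0.
- move=> i j k s ik; case: eqP => [->|_]; last by rewrite mul0r.
  by rewrite (negPf ik) mulr0.
- move=> i s; rewrite (bigD1 ((p s)^-1 i)%g) //= permKV eqxx big1 ?addr0 //.
  by move=> j ji; case: eqP => // pj; rewrite -pj permK eqxx in ji.
- move=> j s; rewrite (bigD1 (p s j)) //= eqxx big1 ?addr0 //.
  by move=> i ij; case: eqP => // pj; rewrite pj eqxx in ij.
Qed.

Lemma magic_completion_of_undef_le (R : realType) (M N : nat)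
    (hMN : (M <= N)%N) (S : {set pperm M}) :
  (forall s, s \in S -> (M - #|pp_dom s| <= N - M)%N) ->
  exists Q : 'I_N -> 'I_N -> CS R S, magic Q /\
    forall i j, Q (widen_ord hMN i) (widen_ord hMN j) = @Pmat R M S i j.
Proof.
move=> undef_le.
have [p pP] := fin_all_exists (fun s : pts S =>
  pperm_completion hMN (undef_le _ (valP s))).
exists (fun i j s => if p s j == i then 1 else 0); split; first exact: perm_magic.
by move=> i j; apply: functional_extensionality => s; rewrite /Pmat pP.
Qed.

Theorem proposition3p4 (R : realType) (M N : nat) (hMN : (M <= N)%N)
    (S : {set pperm M}) :
  let K := (N - M)%N in
  let P := @Pmat R M S in
  [/\ (exists Q : 'I_N -> 'I_N -> CS R S,
          magic Q /\
          forall i j : 'I_M, Q (widen_ord hMN i) (widen_ord hMN j) = P i j)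
      <-> (forall s, s \in S -> (M - #|pp_dom s| <= K)%N),
      (forall s, s \in S -> (M - #|pp_dom s| <= K)%N)
      <-> (forall s : pts S,
             (M%:R - K%:R : R[i]) <= \sum_(i < M) \sum_(j < M) P i j s)
    & (exists Q : 'I_N -> 'I_N -> CS R S,
          magic Q /\
          forall i j : 'I_M, Q (widen_ord hMN i) (widen_ord hMN j) = P i j)
      <-> (forall s : pts S,
             (M%:R - K%:R : R[i]) <= \sum_(i < M) \sum_(j < M) P i j s)].
Proof.
move=> K P.
have iff12 : (exists Q : 'I_N -> 'I_N -> CS R S, magic Q /\
          forall i j : 'I_M, Q (widen_ord hMN i) (widen_ord hMN j) = P i j)
      <-> (forall s, s \in S -> (M - #|pp_dom s| <= K)%N).
  split; last exact: magic_completion_of_undef_le.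
  by case=> Q [Q_magic QP]; apply: magic_completion_undef_le Q_magic QP.
have iff23 : (forall s, s \in S -> (M - #|pp_dom s| <= K)%N)
      <-> (forall s : pts S,
             (M%:R - K%:R : R[i]) <= \sum_(i < M) \sum_(j < M) P i j s).
  split=> undef_le s; first by rewrite sum_Pmat_geE; apply: undef_le (valP s).
  by move=> sS; have := undef_le (exist _ s sS); rewrite sum_Pmat_geE.
by split=> //; apply: iff_trans iff12 iff23.
Qed.
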